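(* Let $\mathcal{N}$ be a one-counter net. A strategy $\sigma$ of Eve in the letter game on $\mathcal{N}$ is winning for Eve if and only if every transition that $\sigma$ takes (in plays consistent with $\sigma$) is residual.
   Context: A one-counter net (OCN) is $\mathcal{N}=(Q,\Sigma,\Delta,q_0,F)$ with $Q$ finite, $\Sigma$ finite, $q_0\in Q$, $F\subseteq Q$, $\Delta\subseteq Q\times\Sigma\times\{-1,0,1\}\times Q$; configurations $(q,n)\in Q\times\mathbb{N}$, step $(q,n)\xrightarrow{a,d}(p,n+d)$ if $(q,a,d,p)\in\Delta$ and $n+d\ge0$; runs start at $(q_0,0)$ and are accepting if the last state is in $F$; $\mathcal{L}(\mathcal{N})$ is the set of words with an accepting run, and $\mathcal{L}(q,k)$ denotes the set of words accepted when runs start at $(q,k)$ instead. A step $(q,k)\xrightarrow{a,d}(q',k')$ is residual if $\mathcal{L}(q',k')=a^{-1}\mathcal{L}(q,k)=\{w: aw\in\mathcal{L}(q,k)\}$. Letter game: positions $(c,w)$, start $((q_0,0),\varepsilon)$; each round Adam picks $a\in\Sigma$, Eve picks a step $c\xrightarrow{a,d}c'$; if Eve has none and $wa$ is a prefix of a word of $\mathcal{L}(\mathcal{N})$ she loses; if $wa\in\mathcal{L}(\mathcal{N})$ but the state of $c'$ is not in $F$, Adam wins; otherwise continue from $(c',wa)$; Eve wins infinite plays. *)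

From mathcomp Require Import all_boot all_order all_algebra.
Set Implicit Arguments. Unset Strict Implicit. Unset Printing Implicit Defensive.
Import GRing.Theory Num.Theory.
Local Open Scope ring_scope.

Record OCN (Q S : finType) := MkOCN {
  delta : Q -> S -> int -> Q -> bool;
  delta_dir : forall q a d p, delta q a d p -> [|| d == -1, d == 0 | d == 1];
  q0 : Q;
  final : {set Q}
}.

Section OCNDefs.
Variables (Q S : finType) (N : OCN Q S).

Definition config := (Q * nat)%type.
(* a move (d, p): the transition (q, a, d, p) from the current state q *)
Definition move := (int * Q)%type.

Definition step_ok (c : config) (a : S) (m : move) : bool :=
  delta N c.1 a m.1 m.2 && (0 <= (c.2)%:Z + m.1).

Definition next (c : config) (m : move) : config := (m.2, absz ((c.2)%:Z + m.1)).

Fixpoint accepts (c : config) (w : seq S) : Prop :=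
  match w with
  | [::] => c.1 \in final N
  | a :: w' => exists m : move, step_ok c a m /\ accepts (next c m) w'
  end.

Definition init : config := (q0 N, 0%N).

Definition in_lang (w : seq S) : Prop := accepts init w.

Definition is_prefix_of_lang (w : seq S) : Prop := exists v, in_lang (w ++ v).

Definition residual (c : config) (a : S) (c' : config) : Prop :=
  forall w, accepts c' w <-> accepts c (a :: w).

(* A strategy of Eve: given the word w read so far and Adam's new letter a,
   choose a transition (d, p) out of the current state. (Positions of the
   play are determined by the word, so this is no loss of generality.) *)
Definition strategy := seq S -> S -> move.

(* The configuration reached by the play consistent with sigma after Adam
   has played the word w; None if Eve got stuck at some earlier round. *)
Fixpoint play_from (sigma : strategy) (h : seq S) (oc : option config)
    (w : seq S) : option config :=
  match w with
  | [::] => oc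
  | a :: w' =>
      match oc with
      | None => None
      | Some c =>
          if step_ok c a (sigma h a)
          then play_from sigma (rcons h a) (Some (next c (sigma h a))) w'
          else None
      end
  end.

Definition play (sigma : strategy) (w : seq S) : option config :=
  play_from sigma [::] (Some init) w.

Definition legal_strategy (sigma : strategy) : Prop :=
  forall w a c, play sigma w = Some c ->
    (exists m, step_ok c a m) -> step_ok c a (sigma w a).

Definition adam_wins_at (sigma : strategy) (w : seq S) (a : S) : Prop :=
  exists c, play sigma w = Some c /\
    ( ((forall m, ~~ step_ok c a m) /\ is_prefix_of_lang (rcons w a))
    \/ (exists c', play sigma (rcons w a) = Some c' /\
                   in_lang (rcons w a) /\ c'.1 \notin final N) ).

(* Eve wins (all plays, finite or infinite) iff Adam never wins a round. *)
Definition eve_winning (sigma : strategy) : Prop :=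
  forall w a, ~ adam_wins_at sigma w a.

Definition takes_only_residual (sigma : strategy) : Prop :=
  forall w a c c', play sigma w = Some c -> play sigma (rcons w a) = Some c' ->
    residual c a c'.

End OCNDefs.

From Pilot Require Import Defs.
From mathcomp Require Import all_boot all_order all_algebra.
Set Implicit Arguments. Unset Strict Implicit.

(* Both conditions are equivalent to the invariant that the configuration
   reached after Adam has played w accepts exactly the residual language
   w^-1 L(N).  Residual steps compose to this invariant, and the invariant
   makes every single step residual.  Along any play L(c) is contained in
   w^-1 L(N); if Eve wins, the reverse inclusion follows by induction on the
   continuation, since a missing step or a non-final state at the end of a
   word of L(N) would be a round won by Adam.  Conversely, under the
   invariant neither kind of round can be won by Adam. *)

Section Plays.
Variables (Q S : finType) (N : OCN Q S) (sigma : strategy Q S).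

Definition reaches_residuals : Prop :=
  forall w c, play N sigma w = Some c ->
  forall v, accepts N c v <-> in_lang N (w ++ v).

Lemma play_from_rcons h oc w a :
  play_from N sigma h oc (rcons w a) =
  obind (fun c => if step_ok N c a (sigma (h ++ w) a)
                  then Some (Defs.next c (sigma (h ++ w) a)) else None)
        (play_from N sigma h oc w).
Proof.
elim: w h oc => [|b w IH] h [c|] //=; first by rewrite cats0.
by case: (step_ok N c b (sigma h b)) => //; rewrite IH cat_rcons.
Qed.

Lemma play_rcons w a :
  play N sigma (rcons w a) =
  obind (fun c => if step_ok N c a (sigma w a)
                  then Some (Defs.next c (sigma w a)) else None)
        (play N sigma w).
Proof. exact: play_from_rcons. Qed.

Lemma play_rcons_Some w a c' : play N sigma (rcons w a) = Some c' ->
  exists2 c, play N sigma w = Some c &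
    step_ok N c a (sigma w a) /\ c' = Defs.next c (sigma w a).
Proof.
rewrite play_rcons; case: (play N sigma w) => [c|] //=.
by case step_a: (step_ok N c a (sigma w a)) => //= -[<-]; exists c.
Qed.

Lemma play_accepts_in_lang w c v :
  play N sigma w = Some c -> accepts N c v -> in_lang N (w ++ v).
Proof.
elim/last_ind: w c v => [c v [<-] //|w a IH] c v.
case/play_rcons_Some=> c0 play_w [step_a ->] acc_v.
by rewrite cat_rcons; apply: (IH c0) => //; exists (sigma w a).
Qed.

Lemma eve_winning_in_lang_accepts : eve_winning N sigma ->
  legal_strategy N sigma ->
  forall v w c, play N sigma w = Some c -> in_lang N (w ++ v) -> accepts N c v.
Proof.
move=> win legal; elim=> [|a v IH] w c play_w.
  rewrite cats0 /=; case/lastP: w play_w => [[<-] //|w a] play_wa w_in_L.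
  case/play_rcons_Some: (play_wa) => c0 play_w _.
  apply/negPn/negP=> c_notfinal.
  by apply: (win w a); exists c0; split=> //; right; exists c.
rewrite -cat_rcons => wa_v_in_L.
case step_a: (step_ok N c a (sigma w a)).
  exists (sigma w a); split=> //; apply: (IH (rcons w a)) => //.
  by rewrite play_rcons play_w /= step_a.
exfalso; apply: (win w a); exists c; split=> //; left; split.
  move=> m; apply/negP=> step_m.
  by move: (legal w a c play_w (ex_intro _ m step_m)); rewrite step_a.
by exists v.
Qed.

Lemma eve_winning_reaches_residuals :
  legal_strategy N sigma -> eve_winning N sigma -> reaches_residuals.
Proof.
move=> legal win w c play_w v; split; first exact: play_accepts_in_lang.
exact: eve_winning_in_lang_accepts.
Qed.

Lemma reaches_residuals_eve_winning : reaches_residuals -> eve_winning N sigma.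
Proof.
move=> inv w a [c [play_w [[stuck [v wa_v_in_L]] |
                              [c' [play_wa [wa_in_L c'_notfinal]]]]]].
  rewrite cat_rcons in wa_v_in_L.
  have [m [step_m _]] := (inv w c play_w (a :: v)).2 wa_v_in_L.
  by move: (stuck m); rewrite step_m.
have := (inv _ c' play_wa [::]).2; rewrite cats0 => /(_ wa_in_L) /= c'_final.
by rewrite c'_final in c'_notfinal.
Qed.

Lemma reaches_residualsP : reaches_residuals <-> takes_only_residual N sigma.
Proof.
split=> [inv w a c c' play_w play_wa v | res].
  apply: iff_trans (inv _ c' play_wa v) _; rewrite cat_rcons.
  exact: iff_sym (inv w c play_w (a :: v)).
elim/last_ind=> [c [<-] //|w a IH] c' play_wa v.
case/play_rcons_Some: (play_wa) => c play_w _.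
apply: iff_trans (res w a c c' play_w play_wa v) _.
by rewrite cat_rcons; apply: IH.
Qed.

End Plays.

Theorem proposition1 (Q S : finType) (N : OCN Q S) (sigma : strategy Q S)
  (Hsigma : legal_strategy N sigma) :
  eve_winning N sigma <-> takes_only_residual N sigma.
Proof.
split=> [win | res].
  exact/reaches_residualsP/(eve_winning_reaches_residuals Hsigma win).
exact/reaches_residuals_eve_winning/reaches_residualsP.
Qed.
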